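(* Let $\mathbb H\subseteq\mathcal G^{\mathrm{dyad}}$ be a group, $n,m\ge1$, $0\le k\le n\wedge m$, $0\le r\le(n\wedge m)-k$, and let $f:((0,1]\times\mathbb R)^n\to\mathbb R$, $f':((0,1]\times\mathbb R)^m\to\mathbb R$ be measurable with $f\in L_2^n$, $f'\in L_2^m$ and $\int_{((0,1]\times\mathbb R)^k}|f(\alpha,\gamma,\rho)f'(\rho,\gamma,\beta)|\,d\mathbbm m^{\otimes k}(\rho)<\infty$ for all $(\alpha,\beta,\gamma)\in((0,1]\times\mathbb R)^{n-k-r}\times((0,1]\times\mathbb R)^{m-k-r}\times((0,1]\times\mathbb R)^r$. Define $$(f\otimes_k^rf')(\alpha,\beta,\gamma)=\Pi_x(\gamma)\int_{((0,1]\times\mathbb R)^k}f(\alpha,\gamma,\rho)f'(\rho,\gamma,\beta)\,d\mathbbm m^{\otimes k}(\rho),$$ where $\Pi_x(\gamma)$ is the product of the $x$-coordinates of $\gamma$. If $f$ is constant on the orbits of $\mathbb H[n]$ and $f'$ is constant on the orbits of $\mathbb H[m]$, then $f\otimes_k^rf'$ is constant on the orbits of $\mathbb H[n+m-2k-r]$.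
   Context: $\mu$ is a $\sigma$-finite Borel measure on $\mathbb R$ and $\mathbbm m=\lambda\otimes\mu$ on $(0,1]\times\mathbb R$ with $\lambda$ Lebesgue measure; $L_2^n=L_2(((0,1]\times\mathbb R)^n,\mathbbm m^{\otimes n})$. $\mathcal G^{\mathrm{dyad}}$ is the group of maps $g_\pi(t)=\pi(j)2^{-d}-(j2^{-d}-t)$ for $t\in((j-1)2^{-d},j2^{-d}]$, $\pi$ a permutation of $\{1,\dots,2^d\}$, $d\ge0$. For $g\in\mathcal G^{\mathrm{dyad}}$, $g[p]((t_1,x_1),\dots,(t_p,x_p))=((g(t_1),x_1),\dots,(g(t_p),x_p))$ and $\mathbb H[p]=\{g[p]:g\in\mathbb H\}$; the orbit of $z$ is $\{g[p](z):g\in\mathbb H\}$. *)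

From HB Require Import structures.
From mathcomp Require Import all_boot all_order all_algebra fingroup perm.
From mathcomp Require Import all_classical all_reals all_analysis.
Set Implicit Arguments. Unset Strict Implicit. Unset Printing Implicit Defensive.
Import Order.TTheory GRing.Theory Num.Theory.
Import numFieldNormedType.Exports.
Local Open Scope classical_set_scope.
Local Open Scope ring_scope.

Section mm_def.
Context (R : realType) (mu : {sigma_finite_measure set R -> \bar R}).

(* the base measure  m = lambda (x) mu  on  R x R  (restriction to (0,1] x R
   is done by integrating over the domain sets below) *)
Definition mm := ((@lebesgue_measure R) \x mu)%E.

Lemma mm_sigma_finite : sigma_finite setT mm.
Proof.
have /sigma_finiteP[F [TF ndF Foo]] := sigma_finiteT (@lebesgue_measure R).
have /sigma_finiteP[G [TG ndG Goo]] := sigma_finiteT mu.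
exists (fun n => F n `*` G n).
 apply/seteqP; split => -[x y] // _.
  have [n _ Fnx] : (\bigcup_n F n) x by rewrite -TF.
  have [k _ Gky] : (\bigcup_n G n) y by rewrite -TG.
  exists (maxn n k) => //; split.
  - by move: x Fnx; exact/subsetPset/ndF/leq_maxl.
  - by move: y Gky; exact/subsetPset/ndG/leq_maxr.
move=> k; have [? ?] := Foo k; have [? ?] := Goo k.
split; first exact: measurableX.
by rewrite /mm product_measure1E// lte_mul_pinfty// ge0_fin_numE.
Qed.

HB.instance Definition _ := Measure.on mm.
HB.instance Definition _ := Measure_isSigmaFinite.Build _ _ _ mm mm_sigma_finite.
End mm_def.

(* A measure space packaged with its display, for the recursive k-fold product *)
Record msp (R : realType) := MSp {
  msp_d : measure_display;
  msp_T : measurableType msp_d;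
  msp_P : {measure set msp_T -> \bar R} }.

(* pw mu k = ((R x R)^k, m^{(x) k}) realized on nested pairs
   ((...((tt, c1), c2) ...), ck) with the iterated product measure *)
Fixpoint pw (R : realType) (mu : {sigma_finite_measure set R -> \bar R})
    (k : nat) : msp R :=
  match k with
  | 0 => @MSp R _ unit (\d_tt)%R
  | S k' => @MSp R _ _ (msp_P (pw mu k') \x mm mu)%E
  end.

Fixpoint flat (R : realType) (mu : {sigma_finite_measure set R -> \bar R})
    (k : nat) : msp_T (pw mu k) -> seq (R * R) :=
  match k with
  | 0 => fun _ => [::]
  | S k' => fun x => rcons (@flat R mu k' x.1) x.2
  end.

Definition in_dom (R : realType) (s : seq (R * R)) : bool :=
  all (fun c => (0 < c.1) && (c.1 <= 1)) s.

Definition Dom (R : realType) (mu : {sigma_finite_measure set R -> \bar R})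
    (k : nat) : set (msp_T (pw mu k)) :=
  [set z | in_dom (flat z)].

Definition Pix (R : realType) (s : seq (R * R)) : R := \prod_(c <- s) c.2.

(* the dyadic map g_pi, with zero-based labelling of the dyadic intervals:
   for t in (i 2^-d, (i+1) 2^-d], g t = (pi i + 1) 2^-d - ((i+1) 2^-d - t);
   it is extended by the identity outside (0,1]. *)
Definition gdyad (R : realType) (d : nat) (pi : {perm 'I_(2 ^ d)}) (t : R) : R :=
  if (0 < t) && (t <= 1) then
    \sum_(i < 2 ^ d)
      (if (i%:R / 2 ^+ d < t) && (t <= i.+1%:R / 2 ^+ d)
       then (pi i).+1%:R / 2 ^+ d - (i.+1%:R / 2 ^+ d - t) else 0)
  else t.

Definition Gdyad (R : realType) : set (R -> R) :=
  [set g | exists d (pi : {perm 'I_(2 ^ d)}), g = gdyad pi].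

Definition dyad_subgroup (R : realType) (H : set (R -> R)) : Prop :=
  [/\ H `<=` @Gdyad R, H id,
      (forall g h, H g -> H h -> H (g \o h)) &
      (forall g, H g -> exists2 h, H h & h \o g = id /\ g \o h = id)].

Definition act (R : realType) (g : R -> R) (z : seq (R * R)) : seq (R * R) :=
  map (fun c => (g c.1, c.2)) z.

(* (f (x)_k^r f')(alpha, beta, gamma), the argument z = (alpha, beta, gamma)
   of length n + m - 2k - r being split as
   alpha = first n-k-r coordinates, beta = next m-k-r, gamma = last r *)
Definition contr (R : realType) (mu : {sigma_finite_measure set R -> \bar R})
    (n m k r : nat) (f f' : seq (R * R) -> R) (z : seq (R * R)) : R :=
  let alpha := take (n - k - r) z in
  let beta := take (m - k - r) (drop (n - k - r) z) in
  let gamma := drop ((n - k - r) + (m - k - r)) z in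
  Pix gamma * Rintegral (msp_P (pw mu k)) (@Dom R mu k)
    (fun rho => f (alpha ++ gamma ++ flat rho) * f' (flat rho ++ gamma ++ beta)).

Arguments Dom {R} mu k.
Arguments flat {R mu k}.
Arguments contr {R} mu n m k r f f' z.
Arguments pw {R} mu k.

(* Every g in H is a dyadic rearrangement: it translates each dyadic interval
   of some level d onto another one and fixes the complement of (0,1], so it
   preserves Lebesgue measure and the domain (0,1].  Its coordinatewise action
   on ((0,1] x R)^k therefore preserves m^{(x) k} and ((0,1] x R)^k, and has
   the action of g^-1 as a measure-preserving inverse.  Acting by g on
   (alpha, beta, gamma) leaves Pi_x(gamma) unchanged, and after the change of
   variables rho |-> g rho in the contraction integral it acts on all arguments
   of f and f', which are invariant.  Since rho |-> f(...) f'(...) need not be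
   measurable, the change of variables is carried out on the simple functions
   that define the integral. *)

From HB Require Import structures.
From mathcomp Require Import all_boot all_order all_algebra fingroup perm.
From mathcomp Require Import all_classical all_reals all_analysis.
From mathcomp Require Import lra zify.
Set Implicit Arguments. Unset Strict Implicit. Unset Printing Implicit Defensive.
Import Order.TTheory GRing.Theory Num.Theory.
Import numFieldNormedType.Exports.
Import HBNNSimple.
Local Open Scope classical_set_scope.
Local Open Scope ring_scope.

Definition measure_preserving d1 d2 (T1 : measurableType d1)
    (T2 : measurableType d2) (R : realType) (P1 : {measure set T1 -> \bar R})
    (P2 : {measure set T2 -> \bar R}) (phi : T1 -> T2) :=
  measurable_fun setT phi /\
  forall A, measurable A -> P1 (phi @^-1` A) = P2 A.

Lemma measure_preserving_id d (T : measurableType d) (R : realType)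
    (P : {measure set T -> \bar R}) : measure_preserving P P id.
Proof. by split. Qed.

Section integral_measure_preserving.
Local Open Scope ereal_scope.
Context (R : realType) d1 d2 (T1 : measurableType d1) (T2 : measurableType d2).

(* The library defines [integral] through this (local) supremum over simple
   functions; the change of variables below needs no measurability of [F]. *)
Let nnintegral d (T : measurableType d) (P : {measure set T -> \bar R})
    (F : T -> \bar R) :=
  ereal_sup [set sintegral P h |
    h in [set h : {nnsfun T >-> R} | forall x, (h x)%:E <= F x]].

Let nnintegral_le_comp d d' (T : measurableType d) (T' : measurableType d')
    (P : {measure set T -> \bar R}) (P' : {measure set T' -> \bar R})
    (phi : T -> T') (F : T' -> \bar R) :
  measure_preserving P P' phi -> nnintegral P' F <= nnintegral P (F \o phi).
Proof.
move=> [mphi Pphi]; apply: ge_ereal_sup => _ [h hF <-].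
pose hphi := (h : T' -> R) \o phi.
have mhphi : measurable_fun setT hphi by exact: measurableT_comp.
have fin_hphi : finite_set (range hphi).
  by apply: sub_finite_set (fimfunP h) => _ [x _ <-]; exists (phi x).
have hphi_ge0 x : (0 <= hphi x)%R by [].
pose Hphi : {nnsfun T >-> R} :=
  HB.pack hphi (isMeasurableFun.Build _ _ _ _ hphi mhphi)
    (FiniteImage.Build _ _ hphi fin_hphi) (isNonNegFun.Build _ _ hphi hphi_ge0).
apply: ereal_sup_ubound; exists Hphi; first by move=> x; exact: hF.
by apply: eq_fsbigr => r _; rewrite -Pphi.
Qed.

Variables (P1 : {measure set T1 -> \bar R}) (P2 : {measure set T2 -> \bar R}).

Lemma integral_comp_measure_preserving (phi : T1 -> T2) (psi : T2 -> T1)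
    (D : set T2) (F : T2 -> \bar R) :
  measure_preserving P1 P2 phi -> measure_preserving P2 P1 psi ->
  cancel psi phi ->
  \int[P1]_(x in phi @^-1` D) F (phi x) = \int[P2]_(y in D) F y.
Proof.
move=> phiP psiP psiK.
have nnintegral_comp G : nnintegral P1 (G \o phi) = nnintegral P2 G.
  apply/eqP; rewrite eq_le nnintegral_le_comp // andbT.
  apply: le_trans (nnintegral_le_comp (G \o phi) psiP) _.
  by rewrite /comp; under eq_fun do rewrite psiK.
have patch_comp : (fun x => F (phi x)) \_ (phi @^-1` D) = (F \_ D) \o phi by [].
rewrite /integral patch_comp.
have -> : ((F \_ D) \o phi)^\+ = (F \_ D)^\+ \o phi.
  by apply/funext => x; rewrite /= !funeposE.
have -> : ((F \_ D) \o phi)^\- = (F \_ D)^\- \o phi.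
  by apply/funext => x; rewrite /= !funenegE.
by congr (_ - _); apply: nnintegral_comp.
Qed.
End integral_measure_preserving.

Section product_measure_preserving.
Local Open Scope ereal_scope.
Context (R : realType) d1 d1' d2 d2' (T1 : measurableType d1)
  (T1' : measurableType d1') (T2 : measurableType d2) (T2' : measurableType d2').
Variables (P1 : {measure set T1 -> \bar R}) (P1' : {measure set T1' -> \bar R}).
Variables (P2 : {sigma_finite_measure set T2 -> \bar R})
  (P2' : {sigma_finite_measure set T2' -> \bar R}).

Lemma measure_preserving_pair (f1 : T1 -> T1') (f2 : T2 -> T2') :
  measure_preserving P1 P1' f1 -> measure_preserving P2 P2' f2 ->
  measure_preserving (P1 \x P2) (P1' \x P2') (fun x => (f1 x.1, f2 x.2)).
Proof.
move=> [mf1 P1f1] [mf2 P2f2]; split.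
  by apply: measurable_fun_pair; apply: measurableT_comp.
move=> A mA; rewrite /product_measure1 /=.
transitivity (\int[P1]_x (P2' \o xsection A) (f1 x)).
  apply: eq_integral => x _ /=.
  have -> : xsection ((fun x => (f1 x.1, f2 x.2)) @^-1` A) x =
            f2 @^-1` xsection A (f1 x).
    by apply/seteqP; split => y; rewrite /xsection /preimage /= !inE.
  by rewrite P2f2 //; exact: measurable_xsection.
have mP2'A := measurable_fun_xsection P2' mA.
transitivity (\int[pushforward P1 f1]_y (P2' \o xsection A) y).
  by rewrite ge0_integral_pushforward // preimage_setT.
by apply: eq_measure_integral => B mB _; exact: P1f1.
Qed.
End product_measure_preserving.

Section dyadic_map.
Context (R : realType) (d : nat).
Local Notation N := ((2 : R) ^+ d).

Definition dyadic_itv (i : nat) : set R := `]i%:R / N, i.+1%:R / N]%classic.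

Lemma dyadic_itvE (i : nat) (t : R) :
  dyadic_itv i t = (i%:R / N < t) && (t <= i.+1%:R / N).
Proof. by rewrite /dyadic_itv /= in_itv. Qed.

Lemma dyadic_itv_sub01 (i : 'I_(2 ^ d)) (t : R) :
  dyadic_itv i t -> (0 < t) && (t <= 1).
Proof.
rewrite dyadic_itvE => /andP[it ti]; apply/andP; split.
  by apply: le_lt_trans it; rewrite divr_ge0.
apply: le_trans ti _; rewrite ler_pdivrMr ?exprn_gt0 // mul1r -natrX ler_nat.
exact: ltn_ord.
Qed.

Lemma dyadic_itv_uniq (i j : nat) (t : R) :
  dyadic_itv i t -> dyadic_itv j t -> i = j.
Proof.
rewrite !dyadic_itvE => /andP[it ti] /andP[jt tj].
have N_gt0 : 0 < N by rewrite exprn_gt0.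
have := lt_le_trans it tj; have := lt_le_trans jt ti.
rewrite !ltr_pM2r ?invr_gt0 // !ltr_nat !ltnS => ji ij.
by apply/eqP; rewrite eqn_leq ij ji.
Qed.

Lemma dyadic_itv_shift (a b : nat) :
  (fun t => t + (b%:R - a%:R) / N) @^-1` dyadic_itv b = dyadic_itv a.
Proof.
apply/seteqP; split => t;
  rewrite /preimage /= !dyadic_itvE !mulrBl -!natr1 !mulrDl mul1r;
  set x := a%:R / N; set y := b%:R / N; set w := N^-1;
  move=> /andP[h1 h2]; apply/andP; split; lra.
Qed.

Lemma dyadic_itv_cover (t : R) :
  (0 < t) && (t <= 1) -> exists i : 'I_(2 ^ d), dyadic_itv i t.
Proof.
move=> /andP[t_gt0 t_le1].
suff [i iN it] : exists2 i, (i < 2 ^ d)%N & dyadic_itv i t by exists (Ordinal iN).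
have : t <= (2 ^ d)%:R / N by rewrite natrX divff // expf_neq0.
elim: (2 ^ d)%N => [|M IH] tM.
  by move: (lt_le_trans t_gt0 tM); rewrite mul0r ltxx.
have [tle|tgt] := leP t (M%:R / N).
  by have [i iM it] := IH tle; exists i => //; rewrite ltnS ltnW.
by exists M => //; rewrite dyadic_itvE tgt tM.
Qed.

Lemma dyadic_partition (X : set R) :
  X = X `\` `]0, 1]%classic `|` \bigcup_(i : 'I_(2 ^ d)) (X `&` dyadic_itv i).
Proof.
apply/seteqP; split => [t Xt|t [[]|[i _ []]]] //.
have [t01|t01] := boolP ((0 < t) && (t <= 1)).
  by have [i it] := dyadic_itv_cover t01; right; exists i.
by left; split => //=; rewrite in_itv; exact/negP.
Qed.

Variable pi : {perm 'I_(2 ^ d)}.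

Definition dyadic_shift (i : 'I_(2 ^ d)) : R := ((pi i)%:R - i%:R) / N.

Lemma gdyad_dyadic_itv (i : 'I_(2 ^ d)) (t : R) :
  dyadic_itv i t -> gdyad pi t = t + dyadic_shift i.
Proof.
move=> it; rewrite /gdyad (dyadic_itv_sub01 it) (bigD1 i) //= big1 ?addr0.
  move: (it); rewrite dyadic_itvE => ->.
  rewrite /dyadic_shift -[(pi i).+1%:R]natr1 -[i.+1%:R]natr1 !mulrDl; lra.
move=> j ji; case: ifP => // jt.
have jt' : dyadic_itv j t by rewrite dyadic_itvE.
by move: ji; rewrite (ord_inj (dyadic_itv_uniq it jt')) eqxx.
Qed.

Lemma gdyad_out (t : R) : ~~ ((0 < t) && (t <= 1)) -> gdyad pi t = t.
Proof. by rewrite /gdyad => /negbTE ->. Qed.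

Lemma gdyad_in01 (t : R) :
  ((0 < gdyad pi t) && (gdyad pi t <= 1)) = ((0 < t) && (t <= 1)).
Proof.
have [t01|t01] := boolP ((0 < t) && (t <= 1)); last first.
  by rewrite gdyad_out // (negbTE t01).
have [i it] := dyadic_itv_cover t01.
rewrite (gdyad_dyadic_itv it); apply: (@dyadic_itv_sub01 (pi i)).
by rewrite -(dyadic_itv_shift i (pi i)) in it.
Qed.

Lemma gdyad_preimage_out (A : set R) :
  gdyad pi @^-1` A `\` `]0, 1]%classic = A `\` `]0, 1]%classic.
Proof.
apply/seteqP; split => t [tA t01]; split => //; move: tA.
all: have t01' : ~~ ((0 < t) && (t <= 1)) by apply/negP; move: t01; rewrite /= in_itv.
all: by rewrite /preimage /= gdyad_out.
Qed.

Lemma gdyad_preimage_dyadic_itv (A : set R) (i : 'I_(2 ^ d)) :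
  gdyad pi @^-1` A `&` dyadic_itv i =
  (fun t => t + dyadic_shift i) @^-1` (A `&` dyadic_itv (pi i)).
Proof.
have Ii := dyadic_itv_shift i (pi i).
apply/seteqP; split => t [tA it].
  by split; [rewrite /= -(gdyad_dyadic_itv it)|rewrite -Ii in it].
have it' : dyadic_itv i t by rewrite -Ii.
by split; rewrite //= (gdyad_dyadic_itv it').
Qed.
End dyadic_map.
Arguments dyadic_itv {R} d i.
Arguments dyadic_shift {R d} pi i.
Arguments dyadic_itv_shift {R d} a b.
Arguments dyadic_partition {R} d X.

Section lebesgue_measure_gdyad.
Context (R : realType).
Local Notation lambda := (@lebesgue_measure R).

Lemma measurable_fun_addr (c : R) : measurable_fun setT (fun t : R => t + c).
Proof. by apply: measurable_realfun.measurable_funD => //; exact: measurable_cst. Qed.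

Lemma lebesgue_measure_shift (c : R) (A : set R) : measurable A ->
  lambda ((fun t => t + c) @^-1` A) = lambda A.
Proof.
move=> mA.
have := @lebesgue_measure_unique R
  (pushforward lambda ((fun t : R => t + c) : R -> measurableTypeR R)).
move=> /(_ (measurable_fun_addr c)) /(_ _ A mA) -> //.
move=> _ [[a b] _ <-] /=.
change (lambda `]a, b] = lambda ((fun t => t + c) @^-1` `]a, b]%classic)).
have -> : (fun t => t + c) @^-1` `]a, b]%classic = `]a - c, b - c]%classic.
  by apply/seteqP; split => t; rewrite /= !in_itv /= ltrBlDr lerBrDr.
rewrite !lebesgue_measure_itv /= !lte_fin ltrD2r.
by case: ifP => // _; congr EFin; lra.
Qed.

Context (d : nat).

Lemma measurable_dyadic_itv (i : nat) : measurable (@dyadic_itv R d i).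
Proof. exact: measurable_itv. Qed.

Lemma measure_dyadic_partition (P : {measure set (measurableTypeR R) -> \bar R})
    (X : set R) : measurable X ->
  P X = (P (X `\` `]0%R, 1%R]%classic) +
         \sum_(i \in [set: 'I_(2 ^ d)]) P (X `&` dyadic_itv d i))%E.
Proof.
move=> mX; have mXi i : measurable (X `&` dyadic_itv d i).
  exact: measurableI mX (measurable_dyadic_itv _).
rewrite {1}(dyadic_partition d X) measureU //; last 3 first.
- exact: measurableD.
- by apply: fin_bigcup_measurable => [|i _]; [exact: finite_finset|exact: mXi].
- apply/seteqP; split => // t [[_ +] [i _ [_ it]]].
  by rewrite /= in_itv (dyadic_itv_sub01 it).
rewrite measure_fin_bigcup //.
- exact: finite_finset.
- by move=> i j _ _ [t [[_ it] [_ jt]]]; exact/ord_inj/(dyadic_itv_uniq it jt).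
- by move=> i _; exact: mXi.
Qed.

Variable pi : {perm 'I_(2 ^ d)}.
Local Notation g := (@gdyad R d pi).

Let measurable_shift_piece i (A : set R) : measurable A ->
  measurable ((fun t => t + dyadic_shift pi i) @^-1` (A `&` dyadic_itv d (pi i))).
Proof.
move=> mA; have mAi : measurable (A `&` dyadic_itv d (pi i)).
  exact: measurableI mA (measurable_dyadic_itv _).
by rewrite -[X in measurable X]setTI; exact: measurable_fun_addr.
Qed.

Lemma measurable_gdyad : measurable_fun setT g.
Proof.
move=> _ A mA; rewrite setTI (dyadic_partition d (g @^-1` A)).
rewrite gdyad_preimage_out; apply: measurableU; first exact: measurableD.
apply: fin_bigcup_measurable => [|i _]; first exact: finite_finset.
by rewrite gdyad_preimage_dyadic_itv; exact: measurable_shift_piece.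
Qed.

Lemma measure_preserving_gdyad : measure_preserving lambda lambda g.
Proof.
split=> [|A mA]; first exact: measurable_gdyad.
have mgA : measurable (g @^-1` A).
  by rewrite -[X in measurable X]setTI; exact: measurable_gdyad.
rewrite [LHS](measure_dyadic_partition _ mgA) [RHS](measure_dyadic_partition _ mA).
rewrite gdyad_preimage_out; congr (_ + _)%E.
rewrite (eq_fsbigr (fun i => lambda (A `&` dyadic_itv d (pi i)))); last first.
  move=> i _; rewrite gdyad_preimage_dyadic_itv; apply: lebesgue_measure_shift.
  exact: measurableI mA (measurable_dyadic_itv _).
apply/esym/(reindex_fsbigT pi (fun j => lambda (A `&` dyadic_itv d j))).
by exists (pi^-1)%g => i; rewrite ?permK ?permKV.
Qed.
End lebesgue_measure_gdyad.

Section pw_map.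
Context (R : realType) (mu : {sigma_finite_measure set R -> \bar R}).

Fixpoint pw_map (g : R -> R) (k : nat) : msp_T (pw mu k) -> msp_T (pw mu k) :=
  match k with
  | 0 => id
  | k'.+1 => fun x => (@pw_map g k' x.1, (g x.2.1, x.2.2))
  end.
Arguments pw_map g k : clear implicits.

Lemma flat_pw_map g k x : flat (pw_map g k x) = act g (flat x).
Proof. by elim: k x => [//|k IH] x /=; rewrite IH /act map_rcons. Qed.

Lemma size_flat k (x : msp_T (pw mu k)) : size (flat x) = k.
Proof. by elim: k x => [//|k IH] x /=; rewrite size_rcons IH. Qed.

Lemma pw_map_can g h k : cancel h g -> cancel (pw_map h k) (pw_map g k).
Proof. by move=> hK; elim: k => [//|k IH] [x [t y]] /=; rewrite IH hK. Qed.

Lemma measure_preserving_pw_map g k :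
  measure_preserving (@lebesgue_measure R) (@lebesgue_measure R) g ->
  measure_preserving (msp_P (pw mu k)) (msp_P (pw mu k)) (pw_map g k).
Proof.
move=> gP; elim: k => [|k IH] /=; first exact: measure_preserving_id.
apply: (measure_preserving_pair (f2 := fun c => (g c.1, c.2)) IH).
exact: (measure_preserving_pair gP (measure_preserving_id mu)).
Qed.
End pw_map.
Arguments pw_map {R} mu g k.

Section coordinates.
Context (R : realType).
Implicit Types (s : seq (R * R)) (g : R -> R).

Lemma in_dom_cat s1 s2 : in_dom (s1 ++ s2) = in_dom s1 && in_dom s2.
Proof. exact: all_cat. Qed.

Lemma in_dom_take n s : in_dom s -> in_dom (take n s).
Proof. by rewrite -{1}(cat_take_drop n s) in_dom_cat => /andP[]. Qed.

Lemma in_dom_drop n s : in_dom s -> in_dom (drop n s).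
Proof. by rewrite -{1}(cat_take_drop n s) in_dom_cat => /andP[]. Qed.

Lemma in_dom_act g s :
  (forall t, ((0 < g t) && (g t <= 1)) = ((0 < t) && (t <= 1))) ->
  in_dom (act g s) = in_dom s.
Proof. by move=> g01; rewrite /in_dom /act all_map; apply: eq_all => c /=. Qed.

Lemma Pix_act g s : Pix (act g s) = Pix s.
Proof. by rewrite /Pix big_map. Qed.
End coordinates.

Lemma integral_Dom_act (R : realType) (mu : {sigma_finite_measure set R -> \bar R})
    (k : nat) (g h : R -> R) (F : seq (R * R) -> R) :
  Gdyad g -> Gdyad h -> cancel h g ->
  (\int[msp_P (pw mu k)]_(rho in Dom mu k) (F (act g (flat rho)))%:E =
   \int[msp_P (pw mu k)]_(rho in Dom mu k) (F (flat rho))%:E)%E.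
Proof.
move=> [d [pi ->]] [d' [pi' ->]] hK.
have DomE : pw_map mu (gdyad pi) k @^-1` Dom mu k = Dom mu k.
  apply/seteqP; split => x; rewrite /Dom /preimage /= flat_pw_map in_dom_act //;
    exact: gdyad_in01.
rewrite -[in LHS]DomE; under eq_integral do rewrite -flat_pw_map.
have gP := measure_preserving_pw_map mu k (measure_preserving_gdyad R pi).
have hP := measure_preserving_pw_map mu k (measure_preserving_gdyad R pi').
exact: (integral_comp_measure_preserving (Dom mu k) (fun y => (F (flat y))%:E)
  gP hP (pw_map_can (mu := mu) (k := k) hK)).
Qed.

Theorem lemma5p5 (R : realType) (mu : {sigma_finite_measure set R -> \bar R})
    (H : set (R -> R)) (n m k r : nat) (f f' : seq (R * R) -> R) :
  dyad_subgroup H ->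
  (1 <= n)%N -> (1 <= m)%N ->
  (k <= minn n m)%N -> (r <= minn n m - k)%N ->
  measurable_fun (Dom mu n) (fun z => f (flat z)) ->
  measurable_fun (Dom mu m) (fun z => f' (flat z)) ->
  (\int[msp_P (pw mu n)]_(z in Dom mu n) ((f (flat z)) ^+ 2)%:E < +oo)%E ->
  (\int[msp_P (pw mu m)]_(z in Dom mu m) ((f' (flat z)) ^+ 2)%:E < +oo)%E ->
  (forall alpha beta gamma : seq (R * R),
      size alpha = (n - k - r)%N -> size beta = (m - k - r)%N ->
      size gamma = r ->
      in_dom alpha -> in_dom beta -> in_dom gamma ->
      (\int[msp_P (pw mu k)]_(rho in Dom mu k)
          `|f (alpha ++ gamma ++ flat rho) * f' (flat rho ++ gamma ++ beta)|%:E
        < +oo)%E) ->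
  (forall g, H g -> forall z, size z = n -> in_dom z -> f (act g z) = f z) ->
  (forall g, H g -> forall z, size z = m -> in_dom z -> f' (act g z) = f' z) ->
  forall g, H g -> forall z, size z = (n + m - 2 * k - r)%N -> in_dom z ->
    contr mu n m k r f f' (act g z) = contr mu n m k r f f' z.
Proof.
(* Square-integrability and integrability only make the contraction meaningful;
   the invariance holds for the integral as defined in any case. *)
move=> [HG _ _ Hinv] _ _ kn rn _ _ _ _ _ f_inv f'_inv g Hg z sz z_dom.
have [h Hh [_ ghK]] := Hinv g Hg.
have hK : cancel h g by move=> t; exact: (congr1 (fun F => F t) ghK).
rewrite /contr /act -!map_drop -!map_take -!/(act g _) Pix_act; congr (_ * _).
set a := (n - k - r)%N; set b := (m - k - r)%N.
set alpha := take a z; set beta := take b (drop a z); set gamma := drop (a + b) z.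
have size_alpha : size alpha = a by rewrite size_takel // sz; lia.
have size_beta : size beta = b by rewrite size_takel // size_drop sz; lia.
have size_gamma : size gamma = r by rewrite size_drop sz; lia.
have alpha_dom : in_dom alpha by exact: in_dom_take.
have beta_dom : in_dom beta by exact/in_dom_take/in_dom_drop.
have gamma_dom : in_dom gamma by exact: in_dom_drop.
rewrite /Rintegral -(@integral_Dom_act R mu k g h
  (fun s => f (act g alpha ++ act g gamma ++ s) * f' (s ++ act g gamma ++ act g beta))
  (HG g Hg) (HG h Hh) hK).
congr fine; apply: eq_integral => rho /[!inE] rho_dom.
rewrite -!map_cat -!/(act g _) f_inv ?f'_inv //.
- by rewrite !size_cat size_flat size_gamma size_beta; lia.
- by rewrite !in_dom_cat rho_dom gamma_dom beta_dom.
- by rewrite !size_cat size_flat size_alpha size_gamma; lia.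
- by rewrite !in_dom_cat rho_dom gamma_dom alpha_dom.
Qed.
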